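(* Let $S$ be a smooth Del Pezzo surface, let $E\subset S$ be a smooth effective anticanonical divisor, let $\beta\in H_2(S,\mathbb{Z})$ be an effective non-zero primitive curve class, and set $w=E\cdot\beta$. Let $\{N_S[dw]\}_{d\ge1}$ and $\{I_{K_S}(d\beta)\}_{d\ge1}$ be two arbitrary sequences of rational numbers, and assume that for all $d\ge1$, $$N_S[dw]=(-1)^{dw+1}\,dw\,I_{K_S}(d\beta).$$ Define sequences of rational numbers $\{n_{d\beta}\}_{d\ge1}$ and $\{n_S[dw]\}_{d\ge1}$ by the equalities of formal power series in $q$ $$\sum_{l=1}^{\infty}I_{K_S}(l\beta)\,q^l=\sum_{d=1}^{\infty}n_{d\beta}\sum_{k=1}^{\infty}\frac{1}{k^3}\,q^{dk},$$ $$\sum_{l=1}^{\infty}N_S[lw]\,q^l=\sum_{d=1}^{\infty}n_S[dw]\sum_{k=1}^{\infty}\frac{1}{k^2}\binom{k(dw-1)-1}{k-1}\,q^{dk}.$$ Then $n_S[dw]\in\mathbb{Z}$ for all $d\ge1$ if and only if $dw\cdot n_{d\beta}\in\mathbb{Z}$ for all $d\ge1$.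
   Context: Binomial coefficients $\binom{n}{m}$ with $n\in\mathbb{Z}$ and $m\ge0$ an integer are understood as $n(n-1)\cdots(n-m+1)/m!$. The two power-series identities determine the sequences $n_{d\beta}$ and $n_S[dw]$ uniquely (by comparing coefficients of $q^d$ recursively in $d$). *)

From mathcomp Require Import all_boot all_order all_algebra.
Set Implicit Arguments. Unset Strict Implicit. Unset Printing Implicit Defensive.
Import Order.TTheory GRing.Theory Num.Theory.
Local Open Scope ring_scope.

Definition binz (n : int) (m : nat) : rat :=
  (\prod_(i < m) ((n - (i : nat)%:Z)%:~R : rat)) / (m`!)%:R.

(* Coefficient of q^l (l >= 1) in  sum_{d>=1} a_d sum_{k>=1} c(d,k) q^{dk}:
   the sum over d | l, with k = l / d. *)
Definition lambert_coef (a : nat -> rat) (c : nat -> nat -> rat) (l : nat) : rat :=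
  \sum_(d < l.+1 | (0 < d)%N && (d %| l)%N) a d * c d (l %/ d)%N.

(* Multiply the coefficient of q^l in both identities by l^2 and use
   N_S[lw] = (-1)^(lw+1) lw I(l beta).  With m_d = dw n_(d beta) and
   h(a, k) = (-1)^(ka+1) binom(k(a-1)-1, k-1), an integer with h(a, 1) = +-1,
   the hypotheses become
     sum_(d | l) d^2 (m_d - h(dw, l/d) n_S[dw]) = 0      for every l >= 1.
   So integrality of either sequence passes to the other by strong induction
   on l, once we know that l^2 divides the part of this sum over d < l whenever
   m_d and n_S[dw] are integers for d < l.  This is checked one prime p | l at a
   time: the terms with d not dividing l/p are divisible by d^2, hence by
   p^(2 v_p(l)); subtracting the relation at l/p from the others leaves the
   terms d^2 (h(dw, l/(pd)) - h(dw, l/d)) n_S[dw], which p^(2 v_p(l)) divides by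
   the Jacobsthal-type congruence h(a, pk) = h(a, k) mod p^(2 v_p(pk)).
   For the congruence, write binom(kc+k-1, k-1) (k-1)! as the product of the
   kc + t over 0 < t < k: the factors with p | t give p^(k/p - 1) times the
   product for k/p, and pairing t with k - t shows that the other factors do
   not depend on c modulo k^2, except for the middle one t = k/2 when p = 2 and
   k/2 is odd, where the change of sign of h compensates modulo 4. *)

From mathcomp Require Import all_boot all_order all_algebra zify ring.
Set Implicit Arguments. Unset Strict Implicit. Unset Printing Implicit Defensive.
Import Order.TTheory GRing.Theory Num.Theory.

Lemma prod_nat_dvdn p k (f : nat -> nat) : 0 < p ->
  \prod_(1 <= t < p * k | p %| t) f t = \prod_(1 <= s < k) f (p * s).
Proof.
move=> p_gt0; elim: k => [|k IHk]; first by rewrite muln0 !big_geq.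
have [->|k_gt0] := posnP k.
  rewrite muln1 [RHS]big_geq // big_nat_cond big1 // => t /andP[/andP[t_gt0 t_lt]].
  by move/dvdn_leq => /(_ t_gt0); rewrite leqNgt t_lt.
rewrite (@big_cat_nat _ _ _ (p * k)) /= ?muln_gt0 ?p_gt0 ?leq_mul2l ?leqnSn ?orbT //.
rewrite IHk big_nat_recr //=; congr (_ * _).
rewrite big_mkcond big_ltn ?ltn_pmul2l //= dvdn_mulr // big_nat_cond big1 ?muln1 //.
move=> t /andP[/andP[t_gt t_lt] _]; case: ifP => // /dvdnP[q tE].
by move: t_gt t_lt; rewrite tE [q * p]mulnC !ltn_pmul2l //; lia.
Qed.

Definition shifted_prod (c k : nat) := \prod_(1 <= t < k) (k * c + t).
Definition shifted_prod_p' (p c k : nat) := \prod_(1 <= t < k | ~~ (p %| t)) (k * c + t).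

Lemma shifted_prod_pmul p c k : 0 < p ->
  shifted_prod c (p * k) = p ^ k.-1 * shifted_prod c k * shifted_prod_p' p c (p * k).
Proof.
move=> p_gt0; rewrite /shifted_prod (bigID (dvdn p)) /= prod_nat_dvdn //; congr (_ * _).
rewrite (eq_bigr (fun s => p * (k * c + s))) => [|s _]; last by rewrite mulnDr mulnA.
by rewrite big_split /= prod_nat_const_nat subn1.
Qed.

Lemma bin_shifted_prod c k : 'C(k * c + k.-1, k.-1) * k.-1`! = shifted_prod c k.
Proof.
rewrite bin_ffact ffact_prod /shifted_prod; case: k => [|k] /=; first by rewrite big_ord0 big_geq.
rewrite big_add1 /= -(big_mkord xpredT) big_nat_rev /=.
rewrite big_nat_cond [RHS]big_nat_cond; apply: eq_bigr => i /andP[/andP[_ i_lt] _].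
by rewrite add0n; lia.
Qed.

Lemma shifted_prod0 k : shifted_prod 0 k = k.-1`!.
Proof. by rewrite -bin_shifted_prod muln0 binn mul1n. Qed.

Lemma bin_shifted_ratio p c k : 0 < p ->
  'C(p * k * c + (p * k).-1, (p * k).-1) * shifted_prod_p' p 0 (p * k) =
  'C(k * c + k.-1, k.-1) * shifted_prod_p' p c (p * k).
Proof.
move=> p_gt0; have := bin_shifted_prod c (p * k).
rewrite -[_.-1`!]shifted_prod0 !shifted_prod_pmul // shifted_prod0 -bin_shifted_prod.
move=> E; apply/eqP.
rewrite -(@eqn_pmul2l (p ^ k.-1 * k.-1`!)) ?muln_gt0 ?expn_gt0 ?p_gt0 ?fact_gt0 //.
by rewrite mulnCA E; apply/eqP; ring.
Qed.

Lemma prod_nat_fold_halves (f : nat -> nat) k (P : pred nat) :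
  (forall t, 0 < t < k -> P (k - t) = P t) ->
  \prod_(1 <= t < k | P t) f t =
  \prod_(1 <= t < k | P t && (t.*2 < k)) (f t * f (k - t)) *
  \prod_(1 <= t < k | P t && (t.*2 == k)) f t.
Proof.
move=> P_sym; rewrite big_split /= [LHS](bigID (fun t => t.*2 < k)) /=.
rewrite [X in _ * X = _](bigID (fun t => t.*2 == k)) /= -!mulnA; congr (_ * _).
rewrite mulnC; congr (_ * _); last first.
  by apply: eq_bigl => t; case: (P t) => /=; lia.
rewrite big_nat_rev /= big_nat_cond [RHS]big_nat_cond.
apply: eq_big => [t|t _]; last by rewrite add1n subSS.
rewrite add1n subSS; case t_lt: (1 <= t < k) => //=.
by rewrite P_sym //; case: (P t) => /=; lia.
Qed.

Lemma prod_pairs_modsq k c (P : pred nat) :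
  \prod_(1 <= t < k | P t && (t.*2 < k)) ((k * c + t) * (k * c + (k - t))) =
  \prod_(1 <= t < k | P t && (t.*2 < k)) (t * (k - t)) %[mod k ^ 2].
Proof.
apply: (big_ind2 (fun a b => a = b %[mod k ^ 2])) => // [a1 a2 b1 b2 Ea Eb|t /andP[_ t_lt]].
  by rewrite -modnMm Ea Eb modnMm.
have -> : (k * c + t) * (k * c + (k - t)) = (c * c + c) * k ^ 2 + t * (k - t).
  have [s ->] : exists s, k = s + t by exists (k - t); lia.
  by rewrite addnK; ring.
by rewrite modnMDl.
Qed.

Lemma shifted_prod_p'_halves p c k : p %| k ->
  shifted_prod_p' p c k =
  \prod_(1 <= t < k | ~~ (p %| t) && (t.*2 < k)) ((k * c + t) * (k * c + (k - t))) *
  \prod_(1 <= t < k | ~~ (p %| t) && (t.*2 == k)) (k * c + t).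
Proof.
move=> p_k; rewrite /shifted_prod_p' (prod_nat_fold_halves _ (P := fun t => ~~ (p %| t))) //.
by move=> t /andP[_ /ltnW t_le]; rewrite dvdn_subr.
Qed.

Lemma shifted_prod_p'_modsq p c k : p %| k -> (forall t, t.*2 == k -> p %| t) ->
  shifted_prod_p' p c k = shifted_prod_p' p 0 k %[mod k ^ 2].
Proof.
move=> p_k p_half; have no_mid t : ~~ (p %| t) && (t.*2 == k) = false.
  by case: (boolP (t.*2 == k)) => [/p_half ->|_]; rewrite ?andbF.
rewrite !shifted_prod_p'_halves // !(eq_bigl _ _ no_mid) !big_pred0_eq !muln1.
by rewrite prod_pairs_modsq (prod_pairs_modsq k 0).
Qed.

Lemma prod_nat_odd_mid (f : nat -> nat) m : odd m ->
  \prod_(1 <= t < m.*2 | ~~ (2 %| t) && (t.*2 == m.*2)) f t = f m.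
Proof.
move=> m_odd; rewrite (eq_bigl (pred1 m)) => [|t]; last first.
  by rewrite /= (inj_eq double_inj); case: eqP => [->|_]; rewrite ?andbF // dvdn2 m_odd.
rewrite -big_filter filter_pred1_uniq ?iota_uniq ?big_seq1 // mem_index_iota.
by case: m m_odd => // m _; rewrite -addnn; lia.
Qed.

Lemma shifted_prod_2'_modsq c m : odd m ->
  shifted_prod_p' 2 c m.*2 = shifted_prod_p' 2 0 m.*2 * c.*2.+1 %[mod m.*2 ^ 2].
Proof.
move=> m_odd; have two_k : 2 %| m.*2 by rewrite dvdn2 odd_double.
rewrite !shifted_prod_p'_halves // !prod_nat_odd_mid // -modnMml prod_pairs_modsq.
by rewrite -(prod_pairs_modsq _ 0) modnMml -mulnA -!muln2 mulnSr; congr (_ * _ %% _); ring.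
Qed.

Lemma coprime_shifted_prod_p' p k : prime p -> coprime p (shifted_prod_p' p 0 k).
Proof.
move=> p_pr; apply: (big_ind (coprime p)) => [|x y|t]; first exact: coprimen1.
  by rewrite coprimeMr => -> ->.
by rewrite muln0 add0n prime_coprime.
Qed.

Lemma dvdn_pfactor_sqr p m n : p ^ m %| n -> p ^ (2 * m) %| n ^ 2.
Proof. by rewrite (mulnC 2) expnM; apply: dvdn_exp2r. Qed.

Local Open Scope ring_scope.

Lemma eqn_mod_dvdz (d m n : nat) : m = n %[mod d] -> (d%:Z %| m%:Z - n%:Z)%Z.
Proof. by move=> mn; rewrite -eqz_mod_dvd; apply/eqP; rewrite !modz_nat mn. Qed.

Lemma dvdz4_odd_sign c : (4 %| (c.*2.+1)%:Z + (-1) ^+ c.+1)%Z.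
Proof.
rewrite -(odd_double_half c); case: (odd c) (c./2) => j; apply/dvdzP.
  rewrite -signr_odd oddS oddD odd_double expr0 -PoszD; exists (j.+1)%:Z.
  by rewrite -PoszM; congr Posz; lia.
rewrite -signr_odd oddS oddD odd_double expr1 -addn1 PoszD addrK; exists j%:Z.
by rewrite -PoszM; congr Posz; lia.
Qed.

(* The integer [binz (k (a - 1) - 1) (k - 1)], see [binz_gbin]. *)
Definition gbin (a k : nat) : int :=
  if a == 1%N then (-1) ^+ k.-1 else ('C(k * (a - 2) + k.-1, k.-1))%:Z.

Definition sgbin (a k : nat) : int := (-1) ^+ (k * a).+1 * gbin a k.

Lemma sgbinn1 a : sgbin a 1 = (-1) ^+ a.+1.
Proof. by rewrite /sgbin /gbin mul1n; case: eqP; rewrite ?bin0 mulr1. Qed.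

Lemma sgbin1n k : (0 < k)%N -> sgbin 1 k = 1.
Proof.
by case: k => // k _; rewrite /sgbin /gbin muln1 -exprD -signr_odd !addSn /= negbK addnn odd_double.
Qed.

Lemma dvdz_sgbin_pmul q p c k : (0 < p)%N ->
  coprime q (shifted_prod_p' p 0 (p * k)) ->
  (q%:Z %| (-1) ^+ (p * k * c.+2).+1 * (shifted_prod_p' p c (p * k))%:Z -
           (-1) ^+ (k * c.+2).+1 * (shifted_prod_p' p 0 (p * k))%:Z)%Z ->
  (q%:Z %| sgbin c.+2 (p * k) - sgbin c.+2 k)%Z.
Proof.
move=> p_gt0 q_U0 dvd_U; rewrite /sgbin /gbin /= !subSS subn0.
rewrite -(@Gauss_dvdzr q (shifted_prod_p' p 0 (p * k)) _ q_U0).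
have := bin_shifted_ratio c k p_gt0; set s1 := (-1) ^+ _; set s2 := (-1) ^+ _.
set C1 := 'C(_, _); set C2 := 'C(_, _) => ratio.
have -> : (shifted_prod_p' p 0 (p * k))%:Z * (s1 * C1%:Z - s2 * C2%:Z) =
          C2%:Z * (s1 * (shifted_prod_p' p c (p * k))%:Z - s2 * (shifted_prod_p' p 0 (p * k))%:Z).
  by rewrite mulrBr mulrBr mulrCA [_%:Z * C1%:Z]mulrC -PoszM ratio PoszM; ring.
exact: dvdz_mull.
Qed.

Lemma sgbin_pmul_congr_even p c k : prime p -> ~~ ((p == 2%N) && odd k) ->
  (((p * k) ^ 2)%N%:Z %| (-1) ^+ (p * k * c.+2).+1 * (shifted_prod_p' p c (p * k))%:Z -
                       (-1) ^+ (k * c.+2).+1 * (shifted_prod_p' p 0 (p * k))%:Z)%Z.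
Proof.
move=> p_pr not_2odd.
have p_half t : t.*2 == (p * k)%N -> (p %| t)%N.
  move/eqP=> tE; have [p2|p_n2] := eqVneq p 2%N.
    by move: not_2odd tE; rewrite p2 dvdn2 /= => k_even tE; have -> : t = k by lia.
  have : (p %| t * 2)%N by rewrite muln2 tE dvdn_mulr.
  by rewrite Gauss_dvdl // prime_coprime // dvdn_prime2.
have -> : (-1) ^+ (k * c.+2).+1 = (-1) ^+ (p * k * c.+2).+1 :> int.
  rewrite -signr_odd -[RHS]signr_odd /= !oddM.
  by case: (even_prime p_pr) not_2odd => [-> /= /negbTE ->|->].
by rewrite -mulrBr dvdz_mull // eqn_mod_dvdz // shifted_prod_p'_modsq // dvdn_mulr.
Qed.

Lemma sgbin_pmul_congr_2odd c k : odd k ->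
  (4 %| (-1) ^+ (2 * k * c.+2).+1 * (shifted_prod_p' 2 c (2 * k))%:Z -
        (-1) ^+ (k * c.+2).+1 * (shifted_prod_p' 2 0 (2 * k))%:Z)%Z.
Proof.
move=> k_odd; rewrite mul2n.
have -> : (-1) ^+ (k.*2 * c.+2).+1 = -1 :> int.
  by rewrite -signr_odd /= oddM odd_double.
have -> : (-1) ^+ (k * c.+2).+1 = (-1) ^+ c.+1 :> int.
  by rewrite -[LHS]signr_odd -[RHS]signr_odd /= oddM k_odd /= negbK.
set U0 := shifted_prod_p' 2 0 k.*2; set Uc := shifted_prod_p' 2 c k.*2.
have -> : -1 * Uc%:Z - (-1) ^+ c.+1 * U0%:Z =
          - (Uc%:Z - (U0 * c.*2.+1)%N%:Z) - U0%:Z * ((c.*2.+1)%:Z + (-1) ^+ c.+1).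
  by rewrite PoszM; ring.
rewrite rpredB ?rpredN ?dvdz_mull ?dvdz4_odd_sign //.
apply: dvdz_trans (eqn_mod_dvdz (shifted_prod_2'_modsq c k_odd)).
by rewrite -mul2n expnMn PoszM dvdz_mulr.
Qed.

Lemma sgbin_congr a p k : (0 < a)%N -> (0 < k)%N -> prime p -> (p %| k)%N ->
  ((p ^ (2 * logn p k))%N%:Z %| sgbin a k - sgbin a (k %/ p))%Z.
Proof.
move=> a_gt0 k_gt0 p_pr /dvdnP[k' kE]; have p_gt0 := prime_gt0 p_pr.
have k'_gt0 : (0 < k')%N by move: k_gt0; rewrite kE muln_gt0 => /andP[].
rewrite kE mulnK // mulnC.
have [->|a_n1] := eqVneq a 1%N; first by rewrite !sgbin1n ?subrr ?dvdz0 ?muln_gt0 ?p_gt0.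
have [c ->] : exists c, a = c.+2 by exists a.-2; lia.
apply: dvdz_sgbin_pmul => //; first by rewrite coprimeXl // coprime_shifted_prod_p'.
case: (boolP ((p == 2%N) && odd k')) => [/andP[/eqP p2 k'_odd]|not_2odd].
  subst p; apply: dvdz_trans (sgbin_pmul_congr_2odd c k'_odd).
  by rewrite lognM // logn_prime // logn_coprime // prime_coprime // dvdn2 k'_odd.
apply: dvdz_trans (sgbin_pmul_congr_even c p_pr not_2odd) => /=.
exact/dvdn_pfactor_sqr/pfactor_dvdnn.
Qed.

Lemma big_divisors_widen (R : nmodType) (F : nat -> R) l n : (0 < l)%N -> (l < n)%N ->
  \sum_(d < l.+1 | (0 < d)%N && (d %| l)%N) F d = \sum_(d < n | (0 < d)%N && (d %| l)%N) F d.
Proof.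
move=> l_gt0 l_lt_n.
rewrite (big_ord_widen_cond _ (fun d => (0 < d)%N && (d %| l)%N) F l_lt_n); apply: eq_bigl => d.
by case: (boolP (d %| l)%N) => [/(dvdn_leq l_gt0) d_le|]; rewrite ?andbF // andbT ltnS d_le andbT.
Qed.

Lemma pfactor_logn_dvdn p d l : prime p -> (0 < l)%N -> (d %| l)%N -> ~~ (d %| l %/ p)%N ->
  (p ^ logn p l %| d)%N.
Proof.
move=> p_pr l_gt0 /dvdnP[e lE] d_ndvd; have p_gt0 := prime_gt0 p_pr.
have [e_gt0 d_gt0] : (0 < e)%N /\ (0 < d)%N by apply/andP; rewrite -muln_gt0 -lE.
rewrite pfactor_dvdn // leqNgt lE lognM // -{1}[logn p d]add0n ltn_add2r.
apply: contra d_ndvd; rewrite lE logn_gt0 mem_primes => /and3P[_ _ /dvdnP[f ->]].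
by rewrite mulnAC mulnK // dvdn_mull.
Qed.

Section DivisorDefect.

Variable g : nat -> nat -> int.

Definition defect_term (R : pzRingType) (u v : nat -> R) (l d : nat) : R :=
  (d ^ 2)%:R * (u d - (g d (l %/ d))%:~R * v d).

Definition defect (R : pzRingType) (u v : nat -> R) (l : nat) (P : pred nat) : R :=
  \sum_(d < l.+1 | (0 < d)%N && (d %| l)%N && P d) defect_term u v l d.

Lemma defect_intr (R : pzRingType) (u v : nat -> int) l P :
  defect (fun d => (u d)%:~R : R) (fun d => (v d)%:~R) l P = (defect u v l P)%:~R.
Proof.
rewrite rmorph_sum; apply: eq_bigr => d _.
by rewrite /defect_term !(rmorphM, rmorphB, rmorph_nat) intz.
Qed.

Lemma eq_defect (R : pzRingType) (u u' v v' : nat -> R) l (P : pred nat) :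
  (forall d, (0 < d)%N -> (d %| l)%N -> P d -> u d = u' d /\ v d = v' d) ->
  defect u v l P = defect u' v' l P.
Proof.
move=> uv_eq; apply: eq_bigr => d /andP[/andP[d_gt0 d_l] Pd].
by have [uE vE] := uv_eq d d_gt0 d_l Pd; rewrite /defect_term uE vE.
Qed.

Lemma defect_split_top (R : pzRingType) (u v : nat -> R) l : (0 < l)%N ->
  defect u v l predT =
  defect u v l (fun d => d < l)%N + (l ^ 2)%:R * (u l - (g l 1)%:~R * v l).
Proof.
move=> l_gt0; rewrite /defect (bigID (fun d : 'I_l.+1 => (d < l)%N)) /=; congr (_ + _).
  by apply: eq_bigl => d; rewrite andbT.
rewrite (big_pred1 ord_max) => [|d]; first by rewrite /defect_term /= divnn l_gt0.
rewrite /= andbT -leqNgt -(inj_eq val_inj) /=.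
have := ltn_ord d; rewrite ltnS.
by case: (ltngtP d l) => [_ _|//|-> _]; rewrite ?andbF // l_gt0 dvdnn.
Qed.

Hypothesis g_congr : forall d k p, (0 < d)%N -> (0 < k)%N -> prime p -> (p %| k)%N ->
  ((p ^ (2 * logn p k))%N%:Z %| g d k - g d (k %/ p))%Z.

Lemma defect_term_pmul_congr (u v : nat -> int) l p d : (0 < l)%N -> prime p -> (p %| l)%N ->
  (0 < d)%N -> (d %| l %/ p)%N ->
  ((p ^ (2 * logn p l))%N%:Z %| defect_term u v l d - defect_term u v (l %/ p) d)%Z.
Proof.
move=> l_gt0 p_pr p_l d_gt0 /dvdnP[j l'E]; have p_gt0 := prime_gt0 p_pr.
have lE : l = (d * (p * j))%N by rewrite -(divnK p_l) l'E; ring.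
have j_gt0 : (0 < j)%N by move: l_gt0; rewrite lE !muln_gt0 => /and3P[].
have ldE : (l %/ d = p * j)%N by rewrite lE mulKn.
rewrite /defect_term l'E mulnK // ldE !intz -mulrBr opprB addrC addrA subrK -mulrBl.
rewrite mulrA dvdz_mulr // lE lognM ?muln_gt0 ?p_gt0 // mulnDr expnD PoszM.
apply: dvdz_mul.
  by rewrite natz; apply/dvdn_pfactor_sqr/pfactor_dvdnn.
rewrite -opprB rpredN.
have := g_congr d_gt0 (_ : 0 < p * j)%N p_pr (dvdn_mulr j (dvdnn p)).
by rewrite mulKn // muln_gt0 p_gt0; apply.
Qed.

Lemma defect_pfactor_dvd (u v : nat -> int) l p : (0 < l)%N -> prime p -> (p %| l)%N ->
  defect u v (l %/ p) predT = 0 ->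
  ((p ^ (2 * logn p l))%N%:Z %| defect u v l (fun d => d < l)%N)%Z.
Proof.
move=> l_gt0 p_pr p_l defect_l'; set l' := (l %/ p)%N.
have l'_gt0 : (0 < l')%N by rewrite divn_gt0 ?prime_gt0 // dvdn_leq.
have l'_lt : (l' < l)%N by rewrite ltn_Pdiv ?prime_gt1.
have dvdn_l d : (d %| l')%N -> (d %| l)%N by move/dvdn_trans; apply; rewrite dvdn_div.
rewrite /defect (bigID (fun d : 'I_l.+1 => (d %| l')%N)) /=; apply: rpredD; last first.
  apply: rpred_sum => d /andP[/andP[/andP[_ d_l] _] d_nl']; rewrite dvdz_mulr //.
  by rewrite natz; apply/dvdn_pfactor_sqr/pfactor_logn_dvdn.
rewrite (eq_bigl (fun d : 'I_l.+1 => (0 < d)%N && (d %| l')%N)) => [|d]; last first.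
  case: (boolP (d %| l')%N) => [d_l'|]; rewrite ?andbF ?andbT // dvdn_l //=.
  by rewrite (leq_ltn_trans (dvdn_leq l'_gt0 d_l')) ?andbT.
rewrite -(big_divisors_widen (defect_term u v l) l'_gt0); last by rewrite ltnS ltnW.
set S := \sum_(d < l'.+1 | _) _; have -> : S = S - defect u v l' predT by rewrite defect_l' subr0.
rewrite /defect (eq_bigl (fun d : 'I_l'.+1 => (0 < d)%N && (d %| l')%N)) => [|d].
  by rewrite -sumrB; apply: rpred_sum => d /andP[d_gt0 d_l']; apply: defect_term_pmul_congr.
by rewrite andbT.
Qed.

Lemma defect_proper_dvd (u v : nat -> int) l : (0 < l)%N ->
  (forall p, prime p -> (p %| l)%N -> defect u v (l %/ p) predT = 0) ->
  ((l ^ 2)%N%:Z %| defect u v l (fun d => d < l)%N)%Z.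
Proof.
move=> l_gt0 defect0; apply/dvdn_partP => [|p]; first by rewrite expn_gt0 l_gt0.
rewrite mem_primes => /and3P[p_pr _]; rewrite Euclid_dvdX // andbT => p_l.
by rewrite p_part lognX; apply: defect_pfactor_dvd; rewrite // defect0.
Qed.

Lemma defect_top_int (u v : nat -> rat) l : (0 < l)%N ->
  (forall l', (0 < l')%N -> defect u v l' predT = 0) ->
  (forall d, (0 < d)%N -> (d < l)%N -> (u d \is a Num.int) && (v d \is a Num.int)) ->
  u l - (g l 1)%:~R * v l \is a Num.int.
Proof.
move=> l_gt0 defect0 uv_int; pose U d := numq (u d); pose V d := numq (v d).
have defect_intrUV l' (P : pred nat) : (forall d, (0 < d)%N -> (d %| l')%N -> P d -> (d < l)%N) ->
    defect u v l' P = (defect U V l' P)%:~R.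
  move=> lt_l; rewrite -defect_intr; apply: eq_defect => d d_gt0 d_l' Pd.
  by have /andP[ud vd] := uv_int d d_gt0 (lt_l d d_gt0 d_l' Pd); rewrite /U /V !numqK.
have /dvdzP[t Dt] : ((l ^ 2)%N%:Z %| defect U V l (fun d => d < l)%N)%Z.
  apply: defect_proper_dvd => // p p_pr p_l.
  have l'_gt0 : (0 < l %/ p)%N by rewrite divn_gt0 ?prime_gt0 // dvdn_leq.
  have l'_lt : (l %/ p < l)%N by rewrite ltn_Pdiv ?prime_gt1.
  apply: (@intr_inj rat); rewrite rmorph0 -defect_intrUV => [|d _ d_l' _]; first exact: defect0.
  exact: leq_ltn_trans (dvdn_leq l'_gt0 d_l') l'_lt.
have := defect0 l l_gt0; rewrite defect_split_top // defect_intrUV => [|d _ _]; last by [].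
rewrite Dt addrC => /eqP; rewrite addr_eq0 => /eqP top_eq; apply/intrP; exists (- t).
have l2_neq0 : (l ^ 2)%:R != 0 :> rat by rewrite pnatr_eq0 expn_eq0 andbT -lt0n l_gt0.
by apply: (mulfI l2_neq0); rewrite top_eq !rmorphN rmorphM /= mulrN mulrC.
Qed.

Lemma defect_int_equiv (u v : nat -> rat) : (forall d, g d 1 ^+ 2 = 1) ->
  (forall l, (0 < l)%N -> defect u v l predT = 0) ->
  (forall d, (0 < d)%N -> u d \is a Num.int) <-> (forall d, (0 < d)%N -> v d \is a Num.int).
Proof.
move=> g1_sqr defect0; split=> [u_int|v_int] l; elim/ltn_ind: l => l IHl l_gt0.
- have top_int := defect_top_int l_gt0 defect0
    (fun d d_gt0 d_lt => introT andP (conj (u_int d d_gt0) (IHl d d_lt d_gt0))).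
  have -> : v l = (g l 1)%:~R * (u l - (u l - (g l 1)%:~R * v l)).
    by rewrite opprB addrC subrK mulrA -rmorphM -expr2 g1_sqr mul1r.
  by rewrite rpredM ?intr_int // rpredB ?u_int.
- have top_int := defect_top_int l_gt0 defect0
    (fun d d_gt0 d_lt => introT andP (conj (IHl d d_lt d_gt0) (v_int d d_gt0))).
  by rewrite -(subrK ((g l 1)%:~R * v l) (u l)) rpredD ?rpredM ?intr_int ?v_int.
Qed.

End DivisorDefect.

Lemma binz_gbin a k : (0 < a)%N -> (0 < k)%N ->
  binz (k%:Z * (a%:Z - 1) - 1) k.-1 = (gbin a k)%:~R.
Proof.
move=> a_gt0 k_gt0; rewrite /binz /gbin.
have fact_neq0 : (k.-1)`!%:R != 0 :> rat by rewrite pnatr_eq0 -lt0n fact_gt0.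
have [->|a_n1] := eqVneq a 1%N.
  rewrite subrr mulr0 sub0r (eq_bigr (fun i : 'I_k.-1 => -1 * (i.+1)%:R)) => [|i _]; last first.
    by rewrite -opprD mulN1r -[1 + _]/(Posz i.+1) rmorphN.
  rewrite big_split /= prodr_const card_ord.
  have -> : \prod_(i < k.-1) (i.+1)%:R = (k.-1)`!%:R :> rat.
    by rewrite -natr_prod fact_prod big_add1 big_mkord.
  by rewrite mulfK // rmorphXn rmorphN1.
case: a a_gt0 a_n1 => [|[|c]] // _ _.
have -> : k%:Z * ((c.+2)%:Z - 1) - 1 = (k * c + k.-1)%N%:Z.
  by nia.
rewrite (eq_bigr (fun i : 'I_k.-1 => (k * c + k.-1 - i)%N%:R)) => [|i _]; last first.
  by rewrite subzn // (leq_trans (ltnW (ltn_ord i))) ?leq_addl.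
by rewrite -natr_prod -ffact_prod -bin_ffact natrM mulfK // !subSS subn0.
Qed.

Lemma lambert_coef_cube (a : nat -> rat) w l : (0 < l)%N ->
  (l ^ 2)%:R * (l * w)%:R * lambert_coef a (fun _ k => 1 / (k%:R ^+ 3)) l =
  \sum_(d < l.+1 | (0 < d)%N && (d %| l)%N) (d ^ 2)%:R * ((d * w)%:R * a d).
Proof.
move=> l_gt0; rewrite /lambert_coef mulr_sumr; apply: eq_bigr => -[d _] /= /andP[d_gt0 d_l].
have lE : l = (l %/ d * d)%N by rewrite divnK.
have k_neq0 : (l %/ d)%:R != 0 :> rat by rewrite pnatr_eq0 -lt0n divn_gt0 // dvdn_leq.
set k := (l %/ d)%N in lE k_neq0 *; rewrite [in LHS]lE !natrX !natrM.
by field.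
Qed.

Lemma lambert_coef_bin (a : nat -> rat) w l : (0 < w)%N -> (0 < l)%N ->
  (-1) ^+ (l * w).+1 * (l ^ 2)%:R *
    lambert_coef a (fun d k => 1 / (k%:R ^+ 2) * binz (k%:Z * ((d * w)%:Z - 1) - 1) k.-1) l =
  \sum_(d < l.+1 | (0 < d)%N && (d %| l)%N) (d ^ 2)%:R * ((sgbin (d * w) (l %/ d))%:~R * a d).
Proof.
move=> w_gt0 l_gt0; rewrite /lambert_coef mulr_sumr; apply: eq_bigr => -[d _] /= /andP[d_gt0 d_l].
have lE : l = (l %/ d * d)%N by rewrite divnK.
have k_gt0 : (0 < l %/ d)%N by rewrite divn_gt0 // dvdn_leq.
have k_neq0 : (l %/ d)%:R != 0 :> rat by rewrite pnatr_eq0 -lt0n.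
rewrite binz_gbin ?muln_gt0 ?d_gt0 // /sgbin intrM intr_sign.
set k := (l %/ d)%N in lE k_neq0 *; rewrite [in LHS]lE -mulnA !natrX !natrM.
by field.
Qed.

Lemma lambert_defect_eq0 w (N I nb nS : nat -> rat) : (0 < w)%N ->
  (forall d, (0 < d)%N -> N d = (-1) ^+ (d * w + 1)%N * (d * w)%:R * I d) ->
  (forall l, (0 < l)%N -> I l = lambert_coef nb (fun _ k => 1 / (k%:R ^+ 3)) l) ->
  (forall l, (0 < l)%N -> N l = lambert_coef nS
     (fun d k => 1 / (k%:R ^+ 2) * binz (k%:Z * ((d * w)%:Z - 1) - 1) k.-1) l) ->
  forall l, (0 < l)%N ->
  defect (fun d => sgbin (d * w)) (fun d => (d * w)%:R * nb d) nS l predT = 0.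
Proof.
move=> w_gt0 hNI hI hN l l_gt0; rewrite /defect /defect_term.
rewrite (eq_bigl (fun d : 'I_l.+1 => (0 < d)%N && (d %| l)%N)) => [|d]; last by rewrite andbT.
under eq_bigr do rewrite mulrBr.
rewrite sumrB -lambert_coef_cube // -lambert_coef_bin // -hI // -hN // hNI // addn1.
set s := (-1) ^+ _; have s2 : s * s = 1 by rewrite -expr2 sqrr_sign.
have -> : s * (l ^ 2)%:R * (s * (l * w)%:R * I l) = s * s * ((l ^ 2)%:R * (l * w)%:R * I l).
  by ring.
by rewrite s2 mul1r subrr.
Qed.

Theorem theorem1p8 (w : nat) (hw : (0 < w)%N) (N I nb nS : nat -> rat)
  (hNI : forall d : nat, (0 < d)%N ->
     N d = (-1) ^+ (d * w + 1)%N * (d * w)%:R * I d)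
  (hI : forall l : nat, (0 < l)%N ->
     I l = lambert_coef nb (fun _ k => 1 / (k%:R ^+ 3)) l)
  (hN : forall l : nat, (0 < l)%N ->
     N l = lambert_coef nS
             (fun d k => 1 / (k%:R ^+ 2) *
                binz (k%:Z * ((d * w)%:Z - 1) - 1) k.-1) l) :
  (forall d : nat, (0 < d)%N -> nS d \is a Num.int) <->
  (forall d : nat, (0 < d)%N -> (d * w)%:R * nb d \is a Num.int).
Proof.
have sgbin_w_congr d k p : (0 < d)%N -> (0 < k)%N -> prime p -> (p %| k)%N ->
    ((p ^ (2 * logn p k))%N%:Z %| sgbin (d * w) k - sgbin (d * w) (k %/ p))%Z.
  by move=> d_gt0; apply: sgbin_congr; rewrite muln_gt0 d_gt0.
have sgbinn1_sqr d : sgbin (d * w) 1 ^+ 2 = 1 by rewrite sgbinn1 sqrr_sign.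
apply: iff_sym; apply: (defect_int_equiv sgbin_w_congr sgbinn1_sqr).
exact: (lambert_defect_eq0 hw hNI hI hN).
Qed.
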